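(* Let $n = 2k+1 > 3$ be an odd integer, $m_1 = k(2k+1)$ and $m_2 = 6k-3$. If an edge-coloring of a complete graph contains no rainbow $n$-cycle, no rainbow $m_1$-cycle and no rainbow $m_2$-cycle, then it contains no rainbow $M$-cycle for every integer $M \ge 8k^2 - 8k + 12 = 2n^2 - 13n + 23$.
   Context: A coloring is an arbitrary (not necessarily proper) assignment of colors, from an arbitrary set, to the edges of an undirected complete graph; the graph may be finite or infinite. A rainbow $n$-cycle is a cycle through $n$ distinct vertices whose $n$ edges all receive pairwise distinct colors. *)

From mathcomp Require Import all_boot.
Set Implicit Arguments. Unset Strict Implicit. Unset Printing Implicit Defensive.

(* An edge-coloring of the complete graph on vertex set V (finite or infinite)
   with colors in C is a symmetric map c : V -> V -> C (values on the diagonal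
   are irrelevant). *)
Definition symmetric_coloring (V C : Type) (c : V -> V -> C) : Prop :=
  forall x y, c x y = c y x.

Definition rainbow_cycle (V C : Type) (c : V -> V -> C) (n : nat) : Prop :=
  3 <= n /\
  exists v : nat -> V,
    (forall i j, i < n -> j < n -> v i = v j -> i = j) /\
    (forall i j, i < n -> j < n ->
       c (v i) (v (i.+1 %% n)) = c (v j) (v (j.+1 %% n)) -> i = j).

From mathcomp Require Import all_boot zify.
From Stdlib Require Import Classical.

(* Take a rainbow M-cycle v_0 ... v_(M-1) and a length 3 <= a < M admitting no
   rainbow cycle.  The chord v_(a-1) v_0 closes the arc v_0 ... v_(a-1) into an
   a-cycle whose first a-1 edges have distinct colours, so the chord repeats the
   colour of one of them.  The same chord therefore closes the complementary arc
   v_(a-1) ... v_(M-1) v_0 into a rainbow (M+2-a)-cycle.  Hence the lengths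
   X >= 3 without rainbow cycles are closed under adding a-2, and every
   M >= 8k^2-8k+12 is 6k-3 plus a non-negative combination of (6k-3)-2,
   k(2k+1)-2 and (2k+1)-2. *)

Set Implicit Arguments.
Unset Strict Implicit.
Unset Printing Implicit Defensive.

Section CycleEdges.
Variables (V C : Type) (c : V -> V -> C).

Definition cycle_edge (v : nat -> V) (n i : nat) : C := c (v i) (v (i.+1 %% n)).

Lemma cycle_edge_inner v n i : i.+1 < n -> cycle_edge v n i = c (v i) (v i.+1).
Proof. by move=> lt_i; rewrite /cycle_edge modn_small. Qed.

Lemma cycle_edge_last v n : 0 < n -> cycle_edge v n n.-1 = c (v n.-1) (v 0).
Proof. by move=> n_gt0; rewrite /cycle_edge prednK // modnn. Qed.

Lemma not_rainbow_cycle_repeat (v : nat -> V) n : 3 <= n ->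
  (forall i j, i < n -> j < n -> v i = v j -> i = j) -> ~ rainbow_cycle c n ->
  exists i j, i < j < n /\ cycle_edge v n i = cycle_edge v n j.
Proof.
move=> n_ge3 v_inj no_rainbow; apply: NNPP => no_repeat; apply: no_rainbow.
split=> //; exists v; split=> // i j lt_i lt_j eq_ij.
case: (ltngtP i j) => // [lt_ij | lt_ji]; case: no_repeat.
- by exists i, j; rewrite lt_ij.
- by exists j, i; rewrite lt_ji.
Qed.

End CycleEdges.

Section Shortcut.
Variables (V C : Type) (c : V -> V -> C) (M a : nat) (v : nat -> V).
Hypotheses (c_sym : symmetric_coloring c) (a_ge3 : 3 <= a) (lt_aM : a < M).
Hypothesis v_inj : forall i j, i < M -> j < M -> v i = v j -> i = j.
Hypothesis edge_inj : forall i j, i < M -> j < M ->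
  cycle_edge c v M i = cycle_edge c v M j -> i = j.
Hypothesis no_rainbow_a : ~ rainbow_cycle c a.

Lemma chord_color_on_arc :
  exists2 i0, i0 < a.-1 & cycle_edge c v M i0 = c (v a.-1) (v 0).
Proof.
have [|i [j [/andP[lt_ij lt_ja] eq_ij]]] :=
    not_rainbow_cycle_repeat (v := v) a_ge3 _ no_rainbow_a.
  by move=> i j lt_i lt_j /v_inj; apply; lia.
have arc_edge x : x.+1 < a -> cycle_edge c v a x = cycle_edge c v M x.
  by move=> lt_x; rewrite !cycle_edge_inner //; lia.
have e_ja : j = a.-1.
  apply: contraTeq (lt_ij) => ne_ja.
  have lt_i : i.+1 < a by lia.
  have lt_j : j.+1 < a by lia.
  suff -> : i = j by rewrite ltnn.
  by apply: edge_inj; rewrite -?arc_edge //; lia.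
have lt_i : i.+1 < a by lia.
exists i; first lia.
by rewrite -arc_edge // eq_ij e_ja cycle_edge_last //; lia.
Qed.

Lemma rainbow_cycle_shortcut : rainbow_cycle c (M + 2 - a).
Proof.
have [i0 lt_i0 chord_color] := chord_color_on_arc.
pose w j := v (if j < (M + 2 - a).-1 then a.-1 + j else 0).
pose f j := if j < (M + 2 - a).-1 then a.-1 + j else i0.
have w_edge j : j < M + 2 - a ->
    cycle_edge c w (M + 2 - a) j = cycle_edge c v M (f j).
  rewrite /f => lt_j; case: ifP => lt_jb.
  - rewrite cycle_edge_inner; last lia.
    rewrite /w lt_jb; case: ifP => lt_jb'.
    + by rewrite cycle_edge_inner; [congr (c _ (v _)) | ]; lia.
    + have -> : a.-1 + j = M.-1 by lia.
      by rewrite cycle_edge_last //; lia.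
  - have -> : j = (M + 2 - a).-1 by lia.
    rewrite cycle_edge_last /w; last lia.
    rewrite ltnn chord_color c_sym; case: ifP => [_|]; last lia.
    by rewrite addn0.
split; first lia.
exists w; split.
- move=> x y lt_x lt_y; rewrite /w.
  by case: ifP => h1; case: ifP => h2 /v_inj; lia.
- move=> x y lt_x lt_y; rewrite -/(cycle_edge c w _ x) -/(cycle_edge c w _ y).
  rewrite !w_edge // /f.
  by case: ifP => h1; case: ifP => h2 /edge_inj; lia.
Qed.

End Shortcut.

Lemma no_rainbow_cycle_add (V C : Type) (c : V -> V -> C) (a X : nat) :
  symmetric_coloring c -> 3 <= a -> 3 <= X ->
  ~ rainbow_cycle c a -> ~ rainbow_cycle c X -> ~ rainbow_cycle c (X + (a - 2)).
Proof.
move=> c_sym a_ge3 X_ge3 no_a no_X [_ [v [v_inj edge_inj]]]; apply: no_X.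
have -> : X = X + (a - 2) + 2 - a by lia.
by apply: (rainbow_cycle_shortcut (v := v)) => //; lia.
Qed.

Lemma no_rainbow_cycle_add_mul (V C : Type) (c : V -> V -> C) (a X : nat) :
  symmetric_coloring c -> 3 <= a -> 3 <= X ->
  ~ rainbow_cycle c a -> ~ rainbow_cycle c X ->
  forall t, ~ rainbow_cycle c (X + t * (a - 2)).
Proof.
move=> c_sym a_ge3 X_ge3 no_a no_X; elim=> [|t IHt]; first by rewrite addn0.
rewrite mulSnr addnA; apply: no_rainbow_cycle_add => //.
exact: leq_trans X_ge3 (leq_addr _ _).
Qed.

Lemma length_decomposition (k M : nat) : 0 < k -> 8 * k ^ 2 - 8 * k + 12 <= M ->
  exists a b t, M = (6 * k - 3) + a * (6 * k - 3 - 2) + b * (k * (2 * k + 1) - 2)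
                    + t * (2 * k + 1 - 2).
Proof.
move=> k_gt0 le_M.
set d := 2 * k - 1.
have d_gt0 : 0 < d by lia.
have [-> -> ->] : [/\ 6 * k - 3 = 3 * d,
    k * (2 * k + 1) - 2 = (k + 1) * d - 1 & 2 * k + 1 - 2 = d].
  by rewrite /d; case: k k_gt0 {le_M d d_gt0} => // j _; split; nia.
have eM := divn_eq M.-1 d; have lt_r := ltn_pmod M.-1 d_gt0.
set Q := M.-1 %/ d in eM *; set r := M.-1 %% d in eM lt_r.
have le_Q : 4 * k - 2 <= Q.
  rewrite -(mulnK (4 * k - 2) d_gt0); apply: leq_div2r.
  have -> : (4 * k - 2) * d = 8 * k ^ 2 - 8 * k + 2.
    by rewrite /d; case: k k_gt0 {le_M d d_gt0 eM lt_r Q r} => // j _; nia.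
  lia.
(* M = (Q + 1) * d - s with s := d.-1 - r = 2 * a + b, and the summands
   3 * d - 2 and (k + 1) * d - 1 are -2 and -1 modulo d. *)
have eS := odd_double_half (d.-1 - r).
set a := (d.-1 - r)./2 in eS; set b := odd (d.-1 - r) in eS.
have le_Q_ab : 2 + 3 * a + b * (k + 1) <= Q by case: b eS => /= eS; lia.
exists a, b, (Q - (2 + 3 * a + b * (k + 1))).
have M_gt0 : 0 < M by lia.
move: (Q - _) (subnKC le_Q_ab) => t eQ; rewrite -eQ in eM; clearbody d Q r a.
have e1 : a * (3 * d - 2) + 2 * a = 3 * (a * d).
  by rewrite mulnC -mulnDl subnK ?mulnA ?(mulnC a); lia.
have e2 : b * ((k + 1) * d - 1) + b = b * (k + 1) * d.
  by rewrite -mulnA -[X in _ + X]muln1 -mulnDr subnK // muln_gt0 addn1.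
move: (a * (3 * d - 2)) (b * (_ - 1)) e1 e2 => X Y e1 e2.
lia.
Qed.

Theorem lemma13 (V C : Type) (c : V -> V -> C) (k : nat) :
  symmetric_coloring c ->
  3 < 2 * k + 1 ->
  ~ rainbow_cycle c (2 * k + 1) ->
  ~ rainbow_cycle c (k * (2 * k + 1)) ->
  ~ rainbow_cycle c (6 * k - 3) ->
  forall M : nat, 8 * k ^ 2 - 8 * k + 12 <= M -> ~ rainbow_cycle c M.
Proof.
move=> c_sym n_gt3 no_n no_m1 no_m2 M le_M.
have k_gt0 : 0 < k by lia.
have [a [b [t ->]]] := length_decomposition k_gt0 le_M.
have m1_ge3 : 3 <= k * (2 * k + 1) by nia.
have m2_ge3 : 3 <= 6 * k - 3 by lia.
have le_m2 x : 3 <= 6 * k - 3 + x := leq_trans m2_ge3 (leq_addr _ _).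
apply: no_rainbow_cycle_add_mul => //; [lia | by rewrite -addnA |].
apply: no_rainbow_cycle_add_mul => //.
exact: no_rainbow_cycle_add_mul.
Qed.
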